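(* Let $V$ be a locally convex topological real vector space and $C$ a cone in $V$. Assume $X$ and $Y$ are nonempty decomposably $C$-antichain-convex subsets of $V$, $X$ is closed, $\operatorname{co}(Y)$ is compact and $X\cap Y=\emptyset$. (1) If $X$ is $C$-upward, then $X$ and $Y$ are strictly separated. (2) If $X$ is $C$-downward, then $X$ and $Y$ are strictly separated.
   Context: A cone in $V$ is a subset $C$ with $\lambda C\subseteq C$ for all $\lambda>0$ (possibly empty, need not contain $0$). $S\subseteq V$ is $C$-antichain-convex iff for all $x,y\in S$ and $\lambda\in[0,1]$ with $y-x\notin C\cup(-C)$ one has $\lambda x+(1-\lambda)y\in S$; $S$ is decomposably $C$-antichain-convex iff $S$ is a Minkowski sum of finitely many $C$-antichain-convex subsets of $V$. $S$ is $C$-upward iff $S+C\subseteq S$; $C$-downward iff $S-C\subseteq S$. $X$ and $Y$ are strictly separated iff there is a continuous linear functional $f$ on $V$ with $\sup f[X]<\inf f[Y]$. *)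

From HB Require Import structures.
From mathcomp Require Import all_boot all_order all_algebra.
From mathcomp Require Import all_classical all_reals.
From mathcomp Require Import topology normedtype tvs ereal.
Set Implicit Arguments. Unset Strict Implicit. Unset Printing Implicit Defensive.
Import Order.TTheory GRing.Theory Num.Theory.
Local Open Scope classical_set_scope.
Local Open Scope ring_scope.

Section defs.
Context {R : realType} {V : lmodType R}.

Definition cone (C : set V) : Prop :=
  forall (l : R) (c : V), 0 < l -> C c -> C (l *: c).

Definition antichain_convex (C : set V) (S : set V) : Prop :=
  forall (x y : V) (l : R), S x -> S y -> 0 <= l <= 1 ->
    ~ C (y - x) -> ~ C (- (y - x)) -> S (l *: x + (1 - l) *: y).

Definition minkowski_sum (n : nat) (S : 'I_n -> set V) : set V :=
  [set v | exists x : 'I_n -> V, (forall i, S i (x i)) /\ v = \sum_(i < n) x i].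

Definition decomp_antichain_convex (C : set V) (S : set V) : Prop :=
  exists (n : nat) (T : 'I_n -> set V),
    (forall i, antichain_convex C (T i)) /\ S = minkowski_sum T.

Definition upward (C : set V) (S : set V) : Prop :=
  forall x c, S x -> C c -> S (x + c).

Definition downward (C : set V) (S : set V) : Prop :=
  forall x c, S x -> C c -> S (x - c).

Definition convex (A : set V) : Prop :=
  forall (x y : V) (l : R), A x -> A y -> 0 <= l <= 1 -> A (l *: x + (1 - l) *: y).

Definition conv_hull (Y : set V) : set V :=
  [set v | forall A : set V, convex A -> Y `<=` A -> A v].

End defs.

Definition strictly_separated {R : realType} {V : tvsType R} (X Y : set V) : Prop :=
  exists f : {linear V -> R^o}, continuous f /\
    (ereal_sup [set ((f x : R)%:E) | x in X] < ereal_inf [set ((f y : R)%:E) | y in Y])%E.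

From HB Require Import structures.
From mathcomp Require Import all_boot all_order all_algebra.
From mathcomp Require Import all_classical all_reals.
From mathcomp Require Import topology normedtype tvs ereal.
From mathcomp Require Import ring lra.
From mathcomp Require convex.
Set Implicit Arguments. Unset Strict Implicit. Unset Printing Implicit Defensive.
Import Order.TTheory GRing.Theory Num.Theory.
Local Open Scope classical_set_scope.
Local Open Scope ring_scope.

(* An upward, decomposably antichain-convex X is convex: a convex combination
   of two points of X is a point of X plus a sum of vectors of C ∪ {0}, and
   these are recession directions of X.  The same decomposition of Y, for the
   cone -C, shows that Y - rec(X) is a convex superset of Y missing X, so
   co(Y) misses X.  The closed convex X and the compact convex co(Y) are then
   strictly separated by Hahn-Banach, obtained from Zorn's lemma and the
   Minkowski gauge of a convex neighbourhood of 0.  The downward case is the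
   upward one for the cone -C. *)

Section antichain_convexity.
Context {R : realType} {V : lmodType R}.
Implicit Types (C S X Y : set V) (l : R).

Definition negcone C : set V := [set v | C (- v)].

Lemma cone_neg C : cone C -> cone (negcone C).
Proof. by move=> hC l c l0 Cc; rewrite /negcone /= -scalerN; apply: hC. Qed.

Lemma antichain_convex_neg C S :
  antichain_convex C S -> antichain_convex (negcone C) S.
Proof.
move=> hS x y l Sx Sy hl nCyx nCxy; apply: hS => // Cyx.
by apply: nCxy; rewrite /negcone /= opprK.
Qed.

Lemma decomp_antichain_convex_neg C S :
  decomp_antichain_convex C S -> decomp_antichain_convex (negcone C) S.
Proof.
by case=> n [T [hT ->]]; exists n, T; split => // i; apply: antichain_convex_neg.
Qed.

Lemma downward_upward_neg C X : downward C X -> upward (negcone C) X.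
Proof. by move=> hX x c Xx Cc; rewrite -[c]opprK; apply: hX. Qed.

Lemma convex_combinationEl (x y : V) l :
  l *: x + (1 - l) *: y = x + (1 - l) *: (y - x).
Proof.
by rewrite scalerBr addrCA -[X in X - (1 - l) *: x]scale1r -scalerBl subKr addrC.
Qed.

Lemma convex_combinationEr (x y : V) l :
  l *: x + (1 - l) *: y = y + l *: (x - y).
Proof. by rewrite scalerBr addrCA -[X in X - l *: y]scale1r -scalerBl. Qed.

Lemma convex_combinationD (a b a' b' : V) l :
  l *: (a + b) + (1 - l) *: (a' + b') =
  (l *: a + (1 - l) *: a') + (l *: b + (1 - l) *: b').
Proof. by rewrite !scalerDr addrACA. Qed.

Lemma convex_combinationN (a a' : V) l :
  l *: - a + (1 - l) *: - a' = - (l *: a + (1 - l) *: a').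
Proof. by rewrite !scalerN opprD. Qed.

Lemma convex_combinationxx (a : V) l : l *: a + (1 - l) *: a = a.
Proof. by rewrite -scalerDl addrC subrK scale1r. Qed.

Lemma antichain_convex_combination C S x y l :
  cone C -> antichain_convex C S -> S x -> S y -> 0 <= l <= 1 ->
  exists2 u, S u & exists2 c, (C `|` [set 0]) c &
    l *: x + (1 - l) *: y = u + c.
Proof.
move=> hC hS Sx Sy /[dup] l01 /andP[l0 l1].
have [Cyx|nCyx] := pselect (C (y - x)).
  exists x => //; exists ((1 - l) *: (y - x)); last exact: convex_combinationEl.
  have [->|l_neq1] := eqVneq l 1; first by right; rewrite subrr scale0r.
  by left; apply: hC; rewrite // subr_gt0 lt_neqAle l_neq1.
have [Cxy|nCxy] := pselect (C (- (y - x))).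
  exists y => //; exists (l *: (x - y)); last exact: convex_combinationEr.
  have [->|l_neq0] := eqVneq l 0; first by right; rewrite scale0r.
  by left; rewrite -opprB; apply: hC; rewrite // lt_neqAle eq_sym l_neq0.
by exists (l *: x + (1 - l) *: y); [apply: hS|exists 0; [right|rewrite addr0]].
Qed.

Lemma minkowski_sum_combination C n (S : 'I_n -> set V) x y l :
  cone C -> (forall i, antichain_convex C (S i)) ->
  minkowski_sum S x -> minkowski_sum S y -> 0 <= l <= 1 ->
  exists2 u, minkowski_sum S u & exists2 c : 'I_n -> V,
    (forall i, (C `|` [set 0]) (c i)) & l *: x + (1 - l) *: y = u + \sum_i c i.
Proof.
move=> hC hS [a [Sa ->]] [b [Sb ->]] l01.
have /choice[uc huc] i : exists uc : V * V, [/\ S i uc.1, (C `|` [set 0]) uc.2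
    & l *: a i + (1 - l) *: b i = uc.1 + uc.2].
  have [u Su [c Cc e]] :=
    antichain_convex_combination hC (hS i) (Sa i) (Sb i) l01.
  by exists (u, c).
exists (\sum_i (uc i).1).
  by exists (fun i => (uc i).1); split => // i; case: (huc i).
exists (fun i => (uc i).2); first by move=> i; case: (huc i).
rewrite !scaler_sumr -!big_split; apply: eq_bigr => i _ /=.
by case: (huc i).
Qed.

Definition recession X : set V :=
  [set k | forall t : R, 0 <= t -> forall x, X x -> X (x + t *: k)].

Lemma recession0 X : recession X 0.
Proof. by move=> t _ x Xx; rewrite scaler0 addr0. Qed.

Lemma recessionD X k k' : recession X k -> recession X k' -> recession X (k + k').
Proof. by move=> hk hk' t t0 x Xx; rewrite scalerDr addrA; apply/hk'/hk. Qed.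

Lemma recessionZ X s k : 0 <= s -> recession X k -> recession X (s *: k).
Proof.
by move=> s0 hk t t0 x Xx; rewrite scalerA; apply: hk; rewrite ?mulr_ge0.
Qed.

Lemma recession_sum X n (k : 'I_n -> V) :
  (forall i, recession X (k i)) -> recession X (\sum_i k i).
Proof.
by move=> hk; apply: big_ind => //; [apply: recession0|apply: recessionD].
Qed.

Lemma recession_add X k x : recession X k -> X x -> X (x + k).
Proof. by move=> hk Xx; rewrite -[k]scale1r; apply: hk. Qed.

Lemma upward_recession C X :
  cone C -> upward C X -> C `|` [set 0] `<=` recession X.
Proof.
move=> hC hX c [Cc t t0 x Xx|->]; last exact: recession0.
have [->|t_neq0] := eqVneq t 0; first by rewrite scale0r addr0.
by apply: hX => //; apply: hC; rewrite // lt_neqAle eq_sym t_neq0.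
Qed.

Lemma upward_decomp_antichain_convex C X : cone C -> upward C X ->
  decomp_antichain_convex C X -> convex X.
Proof.
move=> hC hX [n [S [hS eX]]] x y l Xx Xy l01; rewrite eX in Xx Xy.
have [u Su [c Cc ->]] := minkowski_sum_combination hC hS Xx Xy l01.
apply: recession_add; last by rewrite eX.
by apply: recession_sum => i; apply: (upward_recession hC hX (Cc i)).
Qed.

Lemma convex_sub_recession C X Y : cone C -> upward C X ->
  decomp_antichain_convex C Y -> convex [set y - k | y in Y & k in recession X].
Proof.
move=> hC hX [n [S [hS eY]]] _ _ l [y Yy [k Kk <-]] [y' Yy' [k' Kk' <-]] l01.
rewrite eY in Yy Yy'.
have [u Su [c Cc e]] := minkowski_sum_combination (cone_neg hC)
  (fun i => antichain_convex_neg (hS i)) Yy Yy' l01.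
exists u; first by rewrite eY.
exists (\sum_i - c i + (l *: k + (1 - l) *: k')).
  apply: recessionD; last by case/andP: l01 => l0 l1; apply: recessionD;
    apply: recessionZ; rewrite ?subr_ge0.
  apply: recession_sum => i; apply: upward_recession hC hX _ _.
  by case: (Cc i) => [|->]; [left|right; rewrite oppr0].
by rewrite !scalerBr addrACA -opprD e sumrN [in LHS]opprD opprK addrA.
Qed.

Lemma conv_hull_min (A Y : set V) : convex A -> Y `<=` A -> conv_hull Y `<=` A.
Proof. by move=> cA YA v; apply. Qed.

Lemma sub_conv_hull (Y : set V) : Y `<=` conv_hull Y.
Proof. by move=> y Yy A _; apply. Qed.

Lemma conv_hull_convex (Y : set V) : convex (conv_hull Y).
Proof.
by move=> x y l hx hy l01 A cA YA; apply: (cA x y l (hx A cA YA) (hy A cA YA)).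
Qed.

Lemma conv_hull_disjoint C X Y : cone C -> upward C X ->
  decomp_antichain_convex C Y -> X `&` Y = set0 -> X `&` conv_hull Y = set0.
Proof.
move=> hC hX dY XY0; apply/seteqP; split => // z [Xz].
have sub_hull : Y `<=` [set y - k | y in Y & k in recession X].
  by move=> y Yy; exists y => //; exists 0; [apply: recession0|rewrite subr0].
move=> /(conv_hull_min (convex_sub_recession hC hX dY) sub_hull) [y Yy [k Kk ek]].
have Xy : X y by rewrite -(subrK k y) ek; apply: recession_add.
have : (X `&` Y) y by split.
by rewrite XY0.
Qed.

End antichain_convexity.

Section hahn_banach.
Context {R : realType} {V : lmodType R}.
Variable p : V -> R.
Hypothesis p_add : forall x y, p (x + y) <= p x + p y.
Hypothesis p_hom : forall (t : R) x, 0 < t -> p (t *: x) = t * p x.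
Implicit Types (G : set (V * R)) (z : V * R).

Lemma sublinear0 : p 0 = 0.
Proof. by have := p_hom 0 (ltr0n _ 2); rewrite scaler0; lra. Qed.

Definition linear_graph G :=
  forall a z z', G z -> G z' -> G (a *: z.1 + z'.1, a * z.2 + z'.2).

Definition dominated_graph G := forall z, G z -> z.2 <= p z.1.

Lemma linear_graph00 G z : linear_graph G -> G z -> G (0, 0).
Proof.
by move=> hG Gz; have := hG (-1) _ _ Gz Gz; rewrite scaleN1r mulN1r !addNr.
Qed.

Lemma linear_graphZ G s w r : linear_graph G -> G (w, r) -> G (s *: w, s * r).
Proof.
by move=> hG Gwr; have := hG s _ _ Gwr (linear_graph00 hG Gwr); rewrite /= !addr0.
Qed.

Lemma dominated_linear_graph_uniq G w r r' : linear_graph G ->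
  dominated_graph G -> G (w, r) -> G (w, r') -> r = r'.
Proof.
move=> hG dG Gr Gr'.
have := dG _ (hG (-1) _ _ Gr Gr'); have := dG _ (hG (-1) _ _ Gr' Gr).
by rewrite /= scaleN1r addNr sublinear0; lra.
Qed.

Definition graph_extension G v c : set (V * R) :=
  [set z | exists w r t, G (w, r) /\ z = (w + t *: v, r + t * c)].

Lemma sub_graph_extension G v c : G `<=` graph_extension G v c.
Proof.
by move=> [w r] Gwr; exists w, r, 0; rewrite scale0r mul0r !addr0.
Qed.

Lemma graph_extension_point G v c : G (0, 0) -> graph_extension G v c (v, c).
Proof. by move=> G00; exists 0, 0, 1; rewrite scale1r mul1r !add0r. Qed.

Lemma linear_graph_extension G v c :
  linear_graph G -> linear_graph (graph_extension G v c).
Proof.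
move=> hG a _ _ [w [r [t [Gwr ->]]]] [w' [r' [t' [Gwr' ->]]]].
exists (a *: w + w'), (a * r + r'), (a * t + t'); split; first exact: hG Gwr Gwr'.
by congr pair; rewrite /=; [rewrite scalerDr scalerDl scalerA addrACA|ring].
Qed.

Lemma extension_bound G v : linear_graph G -> dominated_graph G -> G (0, 0) ->
  exists c, forall z, G z -> z.2 - p (z.1 - v) <= c <= p (z.1 + v) - z.2.
Proof.
move=> hG dG G00.
have gap z z' : G z -> G z' -> z'.2 - p (z'.1 - v) <= p (z.1 + v) - z.2.
  move=> Gz Gz'; have := dG _ (hG 1 _ _ Gz Gz').
  have := p_add (z.1 + v) (z'.1 - v).
  by rewrite /= scale1r mul1r addrACA subrr addr0; lra.
pose S := [set z.2 - p (z.1 - v) | z in G].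
have S_ub : has_ubound S.
  by exists (p (0 + v) - 0) => _ [z Gz <-]; apply: gap G00 Gz.
have S_ne : S !=set0 by exists (0 - p (0 - v)), (0, 0).
exists (sup S) => z Gz; apply/andP; split; first by apply: ub_le_sup => //; exists z.
by apply: ge_sup => // _ [z' Gz' <-]; apply: gap.
Qed.

Section extension.
Variables (G : set (V * R)) (v : V) (c : R).
Hypotheses (hG : linear_graph G) (dG : dominated_graph G).
Hypothesis hc : forall z, G z -> z.2 - p (z.1 - v) <= c <= p (z.1 + v) - z.2.

Lemma extension_bound_scaled s w r : 0 < s -> G (w, r) ->
  r - p (w - s *: v) <= s * c <= p (w + s *: v) - r.
Proof.
move=> s_gt0 Gwr; have /andP[] := hc (linear_graphZ s^-1 hG Gwr) => /=.
have scaleK (u : V) : u = s *: (s^-1 *: u).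
  by rewrite scalerA mulfV ?gt_eqF // scale1r.
rewrite (scaleK (w - s *: v)) (scaleK (w + s *: v)) !(p_hom _ s_gt0).
rewrite scalerBr scalerDr scalerA mulVf ?gt_eqF // scale1r.
move=> /(ler_wpM2l (ltW s_gt0)) h1 /(ler_wpM2l (ltW s_gt0)) h2.
rewrite !mulrBr !mulrA mulfV ?gt_eqF // !mul1r in h1 h2.
by apply/andP; split; lra.
Qed.

Lemma dominated_graph_extension : dominated_graph (graph_extension G v c).
Proof.
move=> _ [w [r [t [Gwr ->]]]] /=.
have [t_lt0|t_gt0|->] := ltrgtP t 0.
- have nt_gt0 : 0 < - t by rewrite oppr_gt0.
  have /andP[+ _] := extension_bound_scaled nt_gt0 Gwr.
  by rewrite scaleNr opprK; lra.
- by have /andP[_] := extension_bound_scaled t_gt0 Gwr; lra.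
- by rewrite scale0r mul0r !addr0; apply: dG Gwr.
Qed.

End extension.

Variable v0 : V.
Hypothesis p_v0 : forall t : R, t <= p (t *: v0).

(* Admitting the empty graph makes the union of the empty chain qualify. *)
Definition hb_graph G :=
  [/\ linear_graph G, dominated_graph G & G !=set0 -> G (v0, 1)].

Lemma hb_graph_bigcup (F : set (set (V * R))) :
  F `<=` hb_graph -> total_on F subset -> hb_graph (\bigcup_(G in F) G).
Proof.
move=> Fhb Ftot; split.
- move=> a z z' [G FG Gz] [G' FG' G'z'].
  have [GG'|G'G] := Ftot _ _ FG FG'.
    by exists G' => //; case: (Fhb _ FG') => hG' _ _; apply: hG' => //; apply: GG'.
  by exists G => //; case: (Fhb _ FG) => hG _ _; apply: hG => //; apply: G'G.
- by move=> z [G FG Gz]; case: (Fhb _ FG) => _ dG _; apply: dG.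
- by move=> [z [G FG Gz]]; exists G => //; case: (Fhb _ FG) => _ _; apply; exists z.
Qed.

Lemma hb_graph_line : hb_graph (range (fun t => (t *: v0, t))).
Proof.
split.
- move=> a _ _ [t _ <-] [t' _ <-].
  by exists (a * t + t') => //=; rewrite scalerDl scalerA.
- by move=> _ [t _ <-]; apply: p_v0.
- by move=> _; exists 1; rewrite ?scale1r.
Qed.

Lemma total_linear_graph G : linear_graph G -> dominated_graph G ->
  (forall w, exists r, G (w, r)) -> exists2 f : V -> R,
    (forall a x y, f (a *: x + y) = a * f x + f y) & forall x, G (x, f x).
Proof.
move=> hG dG /choice[f Gf]; exists f => // a x y.
exact: dominated_linear_graph_uniq hG dG (Gf _) (hG a _ _ (Gf x) (Gf y)).
Qed.

Theorem hahn_banach : exists f : V -> R,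
  [/\ forall a x y, f (a *: x + y) = a * f x + f y, f v0 = 1
    & forall x, f x <= p x].
Proof.
have [A [[hA dA A_v0] Amax]] := Zorn_bigcup hb_graph_bigcup.
have Av0 : A (v0, 1).
  have [/A_v0 //|A0] := pselect (A !=set0).
  exfalso; apply: (Amax _ _ hb_graph_line); split => [z Az|line_sub_A].
    by case: A0; exists z.
  by case: A0; exists (v0, 1); apply: line_sub_A; exists 1; rewrite ?scale1r.
have A00 := linear_graph00 hA Av0.
have A_total w : exists r, A (w, r).
  apply: contrapT => nw; have [c hc] := extension_bound w hA dA A00.
  apply: (Amax (graph_extension A w c)).
    split; first exact: sub_graph_extension.
    by move=> /(_ _ (graph_extension_point w c A00)) Awc; apply: nw; exists c.
  split; [exact: linear_graph_extension|exact: dominated_graph_extension|].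
  by move=> _; apply: sub_graph_extension.
have [f flin Af] := total_linear_graph hA dA A_total.
exists f; split => //; first exact: dominated_linear_graph_uniq hA dA (Af _) Av0.
by move=> x; apply: dA (Af x).
Qed.

End hahn_banach.

Section gauge.
Context {R : realType} {V : lmodType R}.

Definition absorbing (W : set V) :=
  forall v, exists2 t : R, 0 < t & W (t^-1 *: v).

Variable W : set V.
Hypotheses (W_convex : convex W) (W0 : W 0) (W_absorbing : absorbing W).

Definition gauge_set v := [set t : R | 0 < t /\ W (t^-1 *: v)].

Definition gauge v := inf (gauge_set v).

Lemma gauge_set_neq0 v : gauge_set v !=set0.
Proof. by have [t t0 Wt] := W_absorbing v; exists t. Qed.

Lemma gauge_set_lbound v : has_lbound (gauge_set v).
Proof. by exists 0 => t [t0 _]; apply: ltW. Qed.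

Lemma gauge_ge0 v : 0 <= gauge v.
Proof.
by apply: lb_le_inf; [apply: gauge_set_neq0|move=> t [t0 _]; apply: ltW].
Qed.

Lemma convex_scale_le1 x (l : R) : W x -> 0 <= l <= 1 -> W (l *: x).
Proof. by move=> Wx l01; have := W_convex Wx W0 l01; rewrite scaler0 addr0. Qed.

Lemma gauge_le v t : 0 < t -> W (t^-1 *: v) -> gauge v <= t.
Proof. by move=> t0 Wt; apply: ge_inf; [apply: gauge_set_lbound|]. Qed.

Lemma gauge_lt_mem v s : gauge v < s -> W (s^-1 *: v).
Proof.
move=> gs; have [t [t0 Wt] ts] := inf_lt (gauge_set_neq0 v) gs.
have s0 : 0 < s by apply: lt_trans ts.
have -> : s^-1 *: v = (t / s) *: (t^-1 *: v).
  by rewrite scalerA mulrAC mulfV ?gt_eqF // mul1r.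
apply: convex_scale_le1 => //; apply/andP; split; first by rewrite divr_ge0 ?ltW.
by rewrite ler_pdivrMr // mul1r ltW.
Qed.

Lemma gauge_le1 w : W w -> gauge w <= 1.
Proof. by move=> Ww; apply: gauge_le; rewrite ?invr1 ?scale1r. Qed.

Lemma notin_gauge_ge1 v : ~ W v -> 1 <= gauge v.
Proof.
move=> nWv; apply: lb_le_inf; first exact: gauge_set_neq0.
move=> t [t0 Wt]; rewrite leNgt; apply/negP => t1; apply: nWv.
have -> : v = t *: (t^-1 *: v) by rewrite scalerA mulfV ?gt_eqF // scale1r.
by apply: convex_scale_le1 => //; rewrite !ltW.
Qed.

Lemma le_gaugeD x y : gauge (x + y) <= gauge x + gauge y.
Proof.
apply/ler_addgt0Pr => e e0.
set s := gauge x + e / 2; set t := gauge y + e / 2.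
have s0 : 0 < s by rewrite /s; have := gauge_ge0 x; lra.
have t0 : 0 < t by rewrite /t; have := gauge_ge0 y; lra.
have Wx : W (s^-1 *: x) by apply: gauge_lt_mem; rewrite /s; lra.
have Wy : W (t^-1 *: y) by apply: gauge_lt_mem; rewrite /t; lra.
have st0 : 0 < s + t by lra.
suff : gauge (x + y) <= s + t by rewrite /s /t; lra.
apply: gauge_le => //.
have l01 : 0 <= s / (s + t) <= 1.
  apply/andP; split; first by rewrite divr_ge0 ?ltW.
  by rewrite ler_pdivrMr // mul1r; lra.
have := W_convex Wx Wy l01.
have -> : 1 - s / (s + t) = t / (s + t).
  apply: (mulIf (lt0r_neq0 st0)).
  by rewrite mulrBl mul1r !mulfVK ?gt_eqF //; lra.
by rewrite !scalerA (mulrAC s) (mulrAC t) !mulfV ?gt_eqF // !mul1r scalerDr.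
Qed.

Lemma le_gaugeZ t v : 0 < t -> gauge (t *: v) <= t * gauge v.
Proof.
move=> t0; rewrite -ler_pdivrMl //; apply: lb_le_inf; first exact: gauge_set_neq0.
move=> s [s0 Ws]; rewrite ler_pdivrMl //; apply: gauge_le; first exact: mulr_gt0.
by rewrite scalerA invfM mulrAC mulVf ?gt_eqF // mul1r.
Qed.

Lemma gaugeZ t v : 0 < t -> gauge (t *: v) = t * gauge v.
Proof.
move=> t0; apply/eqP; rewrite eq_le le_gaugeZ //=.
have := @le_gaugeZ t^-1 (t *: v); rewrite invr_gt0 scalerA mulVf ?gt_eqF // scale1r.
by move=> /(_ t0); rewrite -(ler_pM2l t0) mulrA mulfV ?gt_eqF // mul1r.
Qed.

End gauge.

Section locally_convex_space.
Context {R : realType} {V : tvsType R}.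

Lemma convex_set_convex (B : set V) :
  convex.convex_set (B : set (convex.convex_lmodType V)) -> convex B.
Proof.
move=> cB x y l Bx By /andP[l0 l1].
by have := cB x y (Itv01 l0 l1); rewrite !inE; apply.
Qed.

Lemma nbhs0_convex_sub (N : set V) : nbhs 0 N ->
  exists U : set V, [/\ nbhs 0 U, convex U & U `<=` N].
Proof.
move=> N0; have [B B_convex [B_open B_basis]] := @locally_convex R V.
have [U [BU U0] UN] := B_basis 0 _ N0; exists U; split => //.
  by apply: open_nbhs_nbhs; split => //; apply: B_open.
by apply: convex_set_convex; apply: B_convex; rewrite inE.
Qed.

Lemma nbhs0_absorbing (U : set V) : nbhs 0 U -> absorbing U.
Proof.
move=> U0 v; have := @scale_continuous R V (0, v) U.
rewrite /= scale0r => /(_ U0).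
case=> [[A B]] /= [A0 Bv] AB; have [e e0 eA] := (nbhs_ballP _ _).1 A0.
exists (2 / e); first by rewrite divr_gt0.
rewrite invf_div; apply: (AB (e / 2, v)); split => /=; last exact: nbhs_singleton.
apply: eA; rewrite /ball /= sub0r normrN gtr0_norm ?divr_gt0 //.
by rewrite ltr_pdivrMr // ltr_pMr // ltr1n.
Qed.

Lemma closed_compact_margin (X Z : set V) : closed X -> compact Z ->
  (forall z, Z z -> ~ X z) -> nbhs 0 [set u | forall z, Z z -> ~ X (z - u)].
Proof.
move=> cX cZ ZX.
have := (compact_near_coveringP Z).1 cZ V (nbhs 0) (fun u z => ~ X (z - u)).
move=> /(_ (nbhs_filter 0)) cover.
apply: filterS (cover _) => [u margin_u z Zz|z Zz]; first exact: margin_u.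
have XCz : nbhs (z - 0) (~` X).
  by rewrite subr0; apply: open_nbhs_nbhs; split; [apply: closed_openC|apply: ZX].
have [[A B] /= [Az B0] AB] := @sub_continuous V (z, 0) _ XCz.
by exists (A, B) => // -[z' u] [Az' Bu]; apply: (AB (z', u)).
Qed.

Lemma exists_linear (f : V -> R) :
  (forall a x y, f (a *: x + y) = a * f x + f y) ->
  exists g : {linear V -> R^o}, g =1 f.
Proof.
move=> flin.
have lf : linear_for *:%R (f : V -> R^o) by move=> a x y; apply: flin.
pose g : {linear V -> R^o} :=
  HB.pack (f : V -> R^o) (GRing.isLinear.Build R V R^o *:%R f lf).
by exists g.
Qed.

Lemma linear_le1_continuous (g : {linear V -> R^o}) (U : set V) : nbhs 0 U ->
  (forall u, U u -> g u <= 1) -> continuous g.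
Proof.
move=> U0 gU x.
have U'0 : nbhs 0 (U `&` (-%R @` U)) by apply: filterI => //; apply: nbhs0N.
have gU' u : (U `&` (-%R @` U)) u -> `|g u| <= 1.
  move=> [Uu [u' Uu' eu]].
  by rewrite ler_norml gU // andbT -eu linearN lerN2; apply: gU.
apply/cvgrPdist_lt => e e0.
have e2 : e / 2 != 0 by rewrite gt_eqF // divr_gt0.
apply: filterS (nbhsT x (nbhs0Z e2 U'0)) => _ [_ [u U'u <-] <-] /=.
rewrite linearD linearZ /= opprD addNKr normrN normrM gtr0_norm ?divr_gt0 //.
apply: (le_lt_trans (ler_wpM2l _ (gU' _ U'u))); first by rewrite ltW ?divr_gt0.
by rewrite mulr1 gtr_pMr ?invf_lt1 ?ltr1n.
Qed.

Lemma separate_convex_nbhs0 (W : set V) d : nbhs 0 W -> convex W -> ~ W d ->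
  exists g : {linear V -> R^o},
    [/\ continuous g, g d = 1 & forall w, W w -> g w <= 1].
Proof.
move=> W0 W_convex Wd.
have [W00 W_absorbing] := (nbhs_singleton W0, nbhs0_absorbing W0).
have gauge_d t : t <= gauge W (t *: d).
  have [t_le0|t_gt0] := leP t 0.
    exact: le_trans t_le0 (gauge_ge0 W_absorbing _).
  rewrite gaugeZ // -{1}(mulr1 t) ler_pM2l //; exact: notin_gauge_ge1.
have [f [flin fd fle]] := hahn_banach (le_gaugeD W_convex W00 W_absorbing)
  (gaugeZ W_absorbing) gauge_d.
have [g gf] := exists_linear flin.
have gW w : W w -> g w <= 1.
  by move=> Ww; rewrite gf; apply: le_trans (fle w) (gauge_le1 Ww).
by exists g; split; [apply: linear_le1_continuous W0 gW|rewrite gf|].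
Qed.
End locally_convex_space.


Section strict_separation.
Context {R : realType} {V : tvsType R}.
Lemma convex_compact_separation (X Z : set V) :
  closed X -> convex X -> X !=set0 -> compact Z -> convex Z -> Z !=set0 ->
  X `&` Z = set0 -> exists (g : {linear V -> R^o}) (e : R),
    [/\ continuous g, 0 < e & forall x z, X x -> Z z -> g x + e <= g z].
Proof.
move=> cX X_convex [x0 Xx0] cZ Z_convex [z0 Zz0] XZ0.
have ZX z : Z z -> ~ X z by move=> Zz Xz; have : (X `&` Z) z by []; rewrite XZ0.
have [U [U0 U_convex U_margin]] :=
  nbhs0_convex_sub (closed_compact_margin cX cZ ZX).
pose d := z0 - x0.
(* W = U + (X - Z) + d is a convex neighbourhood of 0 missing d, because
   U keeps X away from Z. *)
pose W := [set w | exists u x z, [/\ U u, X x, Z z & w = u + x - z + d]].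
have W_convex : convex W.
  move=> _ _ l [u [x [z [Uu Xx Zz ->]]]] [u' [x' [z' [Uu' Xx' Zz' ->]]]] l01.
  exists (l *: u + (1 - l) *: u'), (l *: x + (1 - l) *: x'),
    (l *: z + (1 - l) *: z').
  split; [exact: U_convex|exact: X_convex|exact: Z_convex|].
  by rewrite !convex_combinationD convex_combinationN !convex_combinationxx.
have W0 : nbhs 0 W.
  apply: filterS U0 => u Uu; exists u, x0, z0; split => //.
  by rewrite /d addrA subrK addrK.
clearbody d.
have Wd : ~ W d.
  move=> [u [x [z [Uu Xx Zz /(congr1 (fun w => w - d))]]]].
  rewrite subrr addrK => /esym/eqP; rewrite subr_eq0 => /eqP uxz.
  by apply: (U_margin u Uu z Zz); rewrite -uxz addrC addKr.
have [g [gc gd gW]] := separate_convex_nbhs0 W0 W_convex Wd.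
have [t t_gt0 Ut] := nbhs0_absorbing U0 d.
exists g, t^-1; split; rewrite ?invr_gt0 // => x z Xx Zz.
have /gW : W (t^-1 *: d + x - z + d) by exists (t^-1 *: d), x, z.
rewrite !linearD linearN linearZ /= gd -[t^-1%:A]/(t^-1 * 1) mulr1; lra.
Qed.

Lemma strictly_separated_gap (X Y : set V) (g : {linear V -> R^o}) (e : R) :
  continuous g -> 0 < e -> X !=set0 -> Y !=set0 ->
  (forall x y, X x -> Y y -> g x + e <= g y) -> strictly_separated X Y.
Proof.
move=> gc e_gt0 [x0 Xx0] [y0 Yy0] gap; exists g; split => //.
pose S := [set (g x : R) | x in X].
have S_ub : has_ubound S.
  by exists (g y0 - e) => _ [x Xx <-]; have := gap x y0 Xx Yy0; lra.
have S_ne : S !=set0 by exists (g x0), x0.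
apply: (@le_lt_trans _ _ (sup S)%:E).
  apply: ge_ereal_sup => _ [x Xx <-].
  by rewrite lee_fin; apply: ub_le_sup => //; exists x.
apply: (@lt_le_trans _ _ (sup S + e)%:E); first by rewrite lte_fin ltrDl.
apply: le_ereal_inf_tmp => _ [y Yy <-]; rewrite lee_fin -lerBrDr.
by apply: ge_sup => // _ [x Xx <-]; rewrite lerBrDr; apply: gap.
Qed.

Lemma upward_strictly_separated (C X Y : set V) : cone C ->
  X !=set0 -> Y !=set0 ->
  decomp_antichain_convex C X -> decomp_antichain_convex C Y ->
  closed X -> compact (conv_hull Y) -> X `&` Y = set0 ->
  upward C X -> strictly_separated X Y.
Proof.
move=> hC X0 [y Yy] dX dY cX cY XY0 hX.
have [g [e [gc e_gt0 gap]]] := convex_compact_separation cX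
  (upward_decomp_antichain_convex hC hX dX) X0 cY (@conv_hull_convex _ _ Y)
  (ex_intro _ y (sub_conv_hull Yy)) (conv_hull_disjoint hC hX dY XY0).
apply: strictly_separated_gap gc e_gt0 X0 (ex_intro _ y Yy) _ => x y' Xx Yy'.
by apply: gap => //; apply: sub_conv_hull.
Qed.

End strict_separation.

Unset Implicit Arguments.

Theorem theorem9 (R : realType) (V : tvsType R) (C X Y : set V) :
  cone C ->
  X !=set0 -> Y !=set0 ->
  decomp_antichain_convex C X -> decomp_antichain_convex C Y ->
  closed X -> compact (conv_hull Y) -> X `&` Y = set0 ->
  (upward C X -> strictly_separated X Y) /\
  (downward C X -> strictly_separated X Y).
Proof.
move=> hC X0 Y0 dX dY cX cY XY0; split => [|/downward_upward_neg hX].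
  exact: upward_strictly_separated.
exact: upward_strictly_separated (cone_neg hC) X0 Y0
  (decomp_antichain_convex_neg dX) (decomp_antichain_convex_neg dY) cX cY XY0 hX.
Qed.
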